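(* In the category of pointed Frölicher spaces, for any basepoint-preserving smooth map $f:X\to Y$ the sequence $X\xrightarrow{f}Y\xrightarrow{l}\mathbf T_f$ is right exact, where $l(y)=[y]$ is the inclusion of $Y$ into the flattened mapping cone; that is, for every pointed Frölicher space $W$ the sequence of pointed sets $[\mathbf T_f,W]\xrightarrow{l^*}[Y,W]\xrightarrow{f^*}[X,W]$ is exact.
   Context: A Frölicher space is a triple $(X,\mathcal C_X,\mathcal F_X)$ with $\mathcal C_X\subseteq X^{\mathbb R}$, $\mathcal F_X\subseteq\mathbb R^X$, such that $\mathcal F_X=\{f\mid f\circ c\in C^\infty(\mathbb R,\mathbb R)\ \forall c\in\mathcal C_X\}$ and $\mathcal C_X=\{c\mid f\circ c\in C^\infty(\mathbb R,\mathbb R)\ \forall f\in\mathcal F_X\}$. Smooth maps: $g\circ\varphi\in\mathcal F_X$ for all $g\in\mathcal F_Y$. Subspaces carry the initial structure, products the structure generated by $f\circ\pi_i$, coproducts, quotients and pushouts the final structure. $I$ is $[0,1]$ with the subspace structure from $\mathbb R$; $\mathbf I$ is $[0,1]$ with the structure generated by those structure functions of $I$ that are constant on $[0,\epsilon)$ and on $(1-\epsilon,1]$ for some $0<\epsilon<1/4$. The flattened mapping cylinder $\mathbf I_f$ is the quotient of $(\mathbf I\times X)\sqcup Y$ by $(1,x)\sim f(x)$, elements $[t,x]$, $[y]$. In the pointed setting (basepoint $x_0\in X$), the flattened mapping cone $\mathbf T_f$ is the quotient of $\mathbf I_f$ collapsing $(\{0\}\times X)\cup(\mathbf I\times\{x_0\})$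 to a point, which is its basepoint. For pointed $X,W$, $[X,W]$ is the set of basepoint-preserving smooth maps modulo pointed smooth homotopy (smooth $H:I\times X\to W$ with $H(t,x_0)=w_0$), pointed by the class of the constant map; $g^*$ is precomposition with $g$; exactness at the middle means $\operatorname{im}l^*=(f^* )^{-1}(\ast)$. *)

From Stdlib Require Import Reals Lra Relation_Operators.
Open Scope R_scope.

Definition smooth_RR (g : R -> R) : Prop :=
  exists d : nat -> R -> R,
    (forall x, d 0%nat x = g x) /\
    (forall n x, derivable_pt_lim (d n) x (d (S n) x)).

Definition Curves_of {X : Type} (F : (X -> R) -> Prop) : (R -> X) -> Prop :=
  fun c => forall f, F f -> smooth_RR (fun t => f (c t)).
Definition Funs_of {X : Type} (C : (R -> X) -> Prop) : (X -> R) -> Prop :=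
  fun f => forall c, C c -> smooth_RR (fun t => f (c t)).

Record Frol := {
  carrier :> Type;
  curves : (R -> carrier) -> Prop;
  funcs : (carrier -> R) -> Prop;
  funcs_spec : forall f, funcs f <-> Funs_of curves f;
  curves_spec : forall c, curves c <-> Curves_of funcs c }.

Program Definition gen_funcs (X : Type) (F0 : (X -> R) -> Prop) : Frol :=
  {| carrier := X; curves := Curves_of F0; funcs := Funs_of (Curves_of F0) |}.
Next Obligation. tauto. Qed.
Next Obligation.
  split.
  - intros Hc f Hf. exact (Hf c Hc).
  - intros Hc f0 Hf0. apply Hc. intros c' Hc'. exact (Hc' f0 Hf0).
Qed.

Program Definition gen_curves (X : Type) (C0 : (R -> X) -> Prop) : Frol :=
  {| carrier := X; curves := Curves_of (Funs_of C0); funcs := Funs_of C0 |}.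
Next Obligation.
  split.
  - intros Hf c Hc. exact (Hc f Hf).
  - intros Hf c0 Hc0. apply Hf. intros f' Hf'. exact (Hf' c0 Hc0).
Qed.
Next Obligation. tauto. Qed.

Definition smooth {X Y : Frol} (phi : X -> Y) : Prop :=
  forall g, funcs Y g -> funcs X (fun x => g (phi x)).

(** The real line: structure generated by the identity (its curves are the
    C^infinity curves, its functions the C^infinity functions). *)
Definition R_frol : Frol := gen_funcs R (fun g => forall x, g x = x).

Definition subspace (Z : Frol) (P : Z -> Prop) : Frol :=
  gen_funcs {z : Z | P z}
    (fun g => exists h, funcs Z h /\ g = fun s => h (proj1_sig s)).

Definition prodF (A B : Frol) : Frol :=
  gen_funcs (A * B)%type
    (fun g => (exists f, funcs A f /\ g = fun p => f (fst p)) \/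
              (exists f, funcs B f /\ g = fun p => f (snd p))).

Definition coprodF (A B : Frol) : Frol :=
  gen_curves (A + B)%type
    (fun c => (exists c', curves A c' /\ c = fun t => inl (c' t)) \/
              (exists c', curves B c' /\ c = fun t => inr (c' t))).

Definition qrel {Z : Type} (r : Z -> Z -> Prop) := clos_refl_sym_trans Z r.
Definition quot_carrier (Z : Type) (r : Z -> Z -> Prop) : Type :=
  {P : Z -> Prop | exists z, P = qrel r z}.
Definition qproj {Z : Type} (r : Z -> Z -> Prop) (z : Z) : quot_carrier Z r :=
  exist _ (qrel r z) (ex_intro _ z eq_refl).
Definition quotF (Z : Frol) (r : Z -> Z -> Prop) : Frol :=
  gen_curves (quot_carrier Z r)
    (fun c => exists c', curves Z c' /\ c = fun t => qproj r (c' t)).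

Definition I_frol : Frol := subspace R_frol (fun t => 0 <= t <= 1).

Lemma zero_in : 0 <= 0 <= 1. Proof. lra. Qed.
Lemma one_in : 0 <= 1 <= 1. Proof. lra. Qed.
Definition I0 : I_frol := exist _ 0 zero_in.
Definition I1 : I_frol := exist _ 1 one_in.

Definition bI_frol : Frol :=
  gen_funcs I_frol
    (fun g => funcs I_frol g /\
       exists eps, 0 < eps < 1/4 /\
         (forall s t : I_frol, proj1_sig s < eps -> proj1_sig t < eps -> g s = g t) /\
         (forall s t : I_frol, 1 - eps < proj1_sig s -> 1 - eps < proj1_sig t ->
                               g s = g t)).
Definition bI0 : bI_frol := I0.
Definition bI1 : bI_frol := I1.

Record PFrol := { space :> Frol; base : space }.

Definition cyl_rel {X Y : Frol} (f : X -> Y) :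
  coprodF (prodF bI_frol X) Y -> coprodF (prodF bI_frol X) Y -> Prop :=
  fun a b => exists x, a = inl (bI1, x) /\ b = inr (f x).
Definition cylF {X Y : Frol} (f : X -> Y) : Frol :=
  quotF (coprodF (prodF bI_frol X) Y) (cyl_rel f).
Definition cyl_pt {X Y : Frol} (f : X -> Y) (t : bI_frol) (x : X) : cylF f :=
  qproj (cyl_rel f) (inl (t, x)).
Definition cyl_inc {X Y : Frol} (f : X -> Y) (y : Y) : cylF f :=
  qproj (cyl_rel f) (inr y).

(** Flattened mapping cone T_f: collapse ({0} x X) u (bI x {x0}) to a point *)
Definition cone_set {X Y : PFrol} (f : X -> Y) (p : cylF f) : Prop :=
  (exists x, p = cyl_pt f bI0 x) \/ (exists t, p = cyl_pt f t (base X)).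
Definition cone_rel {X Y : PFrol} (f : X -> Y) : cylF f -> cylF f -> Prop :=
  fun p q => cone_set f p /\ cone_set f q.
Definition coneF {X Y : PFrol} (f : X -> Y) : PFrol :=
  {| space := quotF (cylF f) (cone_rel f);
     base := qproj (cone_rel f) (cyl_pt f bI0 (base X)) |}.

Definition cone_inc {X Y : PFrol} (f : X -> Y) (y : Y) : coneF f :=
  qproj (cone_rel f) (cyl_inc f y).

Definition pointed_smooth {X W : PFrol} (g : X -> W) : Prop :=
  smooth g /\ g (base X) = base W.

Definition phomotopic {X W : PFrol} (g g' : X -> W) : Prop :=
  exists H : prodF I_frol X -> W,
    smooth H /\
    (forall x, H (I0, x) = g x) /\
    (forall x, H (I1, x) = g' x) /\
    (forall t, H (t, base X) = base W).

(** Equality of classes in [X,W]: the equivalence relation generated by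
    pointed smooth homotopy. *)
Definition same_class {X W : PFrol} (g g' : X -> W) : Prop :=
  clos_refl_sym_trans (X -> W) phomotopic g g'.

Definition const_map (X W : PFrol) : X -> W := fun _ => base W.

(* (=>) The cone coordinate gives a pointed smooth homotopy from the constant map
        to h o l o f  (x, t) |-> h [t, x]; precomposition with f respects classes.
   (<=) A class equal to the base class is given by a single homotopy K from the
        constant map to g o f (pointed homotopy is symmetric and transitive).  On
        the cylinder set  [t, x] |-> K (sigma t, x)  and  [y] |-> g y,  where sigma
        is a smooth reparametrization of [0,1], constant near 0 and 1, making the
        formula smooth on the flattened interval; it descends to T_f and restricts
        to g along l. *)

From Stdlib Require Import Reals Relation_Operators Lra Lia.
From Stdlib Require Import ClassicalEpsilon FunctionalExtensionality PropExtensionality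
  ProofIrrelevance.
Open Scope R_scope.

Fixpoint Dn (n : nat) (g : R -> R) : Prop :=
  match n with
  | O => True
  | S m => exists g', (forall x, derivable_pt_lim g x (g' x)) /\ Dn m g'
  end.

Lemma Dn_pred n g : Dn (S n) g -> Dn n g.
Proof.
  revert g; induction n as [|n IH]; intros g H; simpl in *; auto.
  destruct H as [g' [Hd Hn]]. exists g'; split; auto.
Qed.

Lemma smooth_RR_deriv g : smooth_RR g ->
  exists g', (forall x, derivable_pt_lim g x (g' x)) /\ smooth_RR g'.
Proof.
  intros [d [Hd0 Hd]]. exists (d 1%nat). split.
  - intros x. replace g with (d 0%nat) by (extensionality y; auto). apply Hd.
  - exists (fun n => d (S n)). split; auto.
Qed.

(** Smoothness is "n times differentiable for every n"; the converse direction
    chooses the derivatives, which are unique. This lets closure properties be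
    proved by induction on [n]. *)
Lemma smooth_RR_Dn g : smooth_RR g <-> forall n, Dn n g.
Proof.
  split.
  - intros Hg n. revert g Hg. induction n as [|n IH]; intros g Hg; simpl; auto.
    destruct (smooth_RR_deriv g Hg) as [g' [H1 H2]]. exists g'; split; auto.
  - set (Q := fun h => forall n, Dn n h).
    assert (next : forall h : {h | Q h}, {h' : {h | Q h} |
              forall x, derivable_pt_lim (proj1_sig h) x (proj1_sig h' x)}).
    { intros [h Hh]. apply constructive_indefinite_description.
      destruct (Hh 1%nat) as [h1 [Hd1 _]].
      assert (Qh1 : Q h1).
      { intros n. destruct (Hh (S n)) as [h2 [Hd2 Hn2]].
        replace h1 with h2; auto.
        extensionality x. eapply uniqueness_limite; eauto. }
      exists (exist _ h1 Qh1). simpl. auto. }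
    intros Hg.
    exists (fun n => proj1_sig (Nat.iter n (fun h => proj1_sig (next h)) (exist Q g Hg))).
    split; [reflexivity|].
    intros n x. simpl. apply (proj2_sig (next _)).
Qed.

Lemma Dn_const n a : Dn n (fun _ => a).
Proof.
  revert a; induction n as [|n IH]; intros a; simpl; auto.
  exists (fun _ => 0). split; auto. intros x. apply derivable_pt_lim_const.
Qed.

Lemma Dn_plus_mult n : forall u v, Dn n u -> Dn n v ->
  Dn n (fun x => u x + v x) /\ Dn n (fun x => u x * v x).
Proof.
  induction n as [|n IH]; intros u v Hu Hv; simpl; auto.
  pose proof (Dn_pred n u Hu) as Hu0. pose proof (Dn_pred n v Hv) as Hv0.
  destruct Hu as [u' [Hu1 Hu2]]. destruct Hv as [v' [Hv1 Hv2]].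
  split.
  - exists (fun x => u' x + v' x). split.
    + intros x. apply (derivable_pt_lim_plus u v x); auto.
    + apply IH; auto.
  - exists (fun x => u' x * v x + u x * v' x). split.
    + intros x. apply (derivable_pt_lim_mult u v x); auto.
    + apply IH; apply IH; auto.
Qed.

Lemma Dn_plus n u v : Dn n u -> Dn n v -> Dn n (fun x => u x + v x).
Proof. intros; apply Dn_plus_mult; auto. Qed.

Lemma Dn_mult n u v : Dn n u -> Dn n v -> Dn n (fun x => u x * v x).
Proof. intros; apply Dn_plus_mult; auto. Qed.

Lemma derivable_pt_lim_Rinv v x l : v x <> 0 -> derivable_pt_lim v x l ->
  derivable_pt_lim (fun y => / v y) x (-1 * l * (/ v x * / v x)).
Proof.
  intros Hnz Hv.
  pose proof (derivable_pt_lim_div (fun _ => 1) v x 0 l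
                (derivable_pt_lim_const 1 x) Hv Hnz) as D.
  replace (-1 * l * (/ v x * / v x)) with ((0 * v x - l * 1) / (v x)²)
    by (unfold Rsqr; field; auto).
  apply (derivable_pt_lim_ext (div_fct (fun _ => 1) v)); auto.
  intros z. unfold div_fct, Rdiv. ring.
Qed.

Lemma Dn_inv n : forall v, (forall x, v x <> 0) -> Dn n v -> Dn n (fun x => / v x).
Proof.
  induction n as [|n IH]; intros v Hnz Hv; simpl; auto.
  pose proof (Dn_pred n v Hv) as Hv0.
  destruct Hv as [v' [Hv1 Hv2]].
  exists (fun x => -1 * v' x * (/ v x * / v x)). split.
  - intros x. apply derivable_pt_lim_Rinv; auto.
  - apply Dn_mult; [apply Dn_mult; auto; apply Dn_const|].
    apply Dn_mult; apply IH; auto.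
Qed.

Lemma Dn_comp n : forall u v, smooth_RR u -> smooth_RR v -> Dn n (fun x => u (v x)).
Proof.
  induction n as [|n IH]; intros u v Hu Hv; simpl; auto.
  destruct (smooth_RR_deriv u Hu) as [u' [Hu1 Hu2]].
  destruct (smooth_RR_deriv v Hv) as [v' [Hv1 Hv2]].
  exists (fun x => u' (v x) * v' x). split.
  - intros x. apply (derivable_pt_lim_comp v u x); auto.
  - apply Dn_mult; auto. apply smooth_RR_Dn; auto.
Qed.

Lemma smooth_RR_const a : smooth_RR (fun _ => a).
Proof. apply smooth_RR_Dn; intros; apply Dn_const. Qed.

Lemma smooth_RR_id : smooth_RR (fun x => x).
Proof.
  exists (fun n => match n with O => fun x => x | S O => fun _ => 1 | _ => fun _ => 0 end).
  split; auto. intros [|[|n]] x; simpl.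
  - apply derivable_pt_lim_id.
  - apply derivable_pt_lim_const.
  - apply derivable_pt_lim_const.
Qed.

Lemma smooth_RR_plus u v : smooth_RR u -> smooth_RR v -> smooth_RR (fun x => u x + v x).
Proof. rewrite !smooth_RR_Dn; intros; apply Dn_plus; auto. Qed.

Lemma smooth_RR_mult u v : smooth_RR u -> smooth_RR v -> smooth_RR (fun x => u x * v x).
Proof. rewrite !smooth_RR_Dn; intros; apply Dn_mult; auto. Qed.

Lemma smooth_RR_inv v : (forall x, v x <> 0) -> smooth_RR v -> smooth_RR (fun x => / v x).
Proof. rewrite !smooth_RR_Dn; intros; apply Dn_inv; auto. Qed.

Lemma smooth_RR_comp u v : smooth_RR u -> smooth_RR v -> smooth_RR (fun x => u (v x)).
Proof. intros; apply smooth_RR_Dn; intros; apply Dn_comp; auto. Qed.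

Lemma smooth_RR_ext u v : (forall x, u x = v x) -> smooth_RR u -> smooth_RR v.
Proof. intros H; replace v with u by (extensionality x; auto); auto. Qed.

Lemma smooth_RR_minus u v : smooth_RR u -> smooth_RR v -> smooth_RR (fun x => u x - v x).
Proof.
  intros Hu Hv. apply (smooth_RR_ext (fun x => u x + (-1) * v x)); [intros; ring|].
  apply smooth_RR_plus; auto. apply smooth_RR_mult; auto. apply smooth_RR_const.
Qed.

Lemma smooth_RR_affine a b : smooth_RR (fun t => a * t + b).
Proof.
  apply smooth_RR_plus; [apply smooth_RR_mult|]; auto using smooth_RR_const, smooth_RR_id.
Qed.


(** The flat functions [flat k t = t^(-k) exp(-1/t)] for [t > 0], [0] for [t <= 0].
    Their derivatives are combinations of flat functions, so all are smooth. *)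
Definition flat_core (k : nat) (t : R) : R := (/ t) ^ k * exp (- / t).
Definition flat (k : nat) (t : R) : R := if Rlt_dec 0 t then flat_core k t else 0.

Lemma flat_pos k t : 0 < t -> flat k t = flat_core k t.
Proof. intros H; unfold flat; destruct (Rlt_dec 0 t); lra. Qed.

Lemma flat_npos k t : t <= 0 -> flat k t = 0.
Proof. intros H; unfold flat; destruct (Rlt_dec 0 t); lra. Qed.

Lemma derivable_flat_core k t : t <> 0 ->
  derivable_pt_lim (flat_core k) t (- INR k * flat_core (S k) t + flat_core (S (S k)) t).
Proof.
  intros Ht.
  assert (Hinv : derivable_pt_lim (fun y => / y) t (-1 * 1 * (/ t * / t)))
    by (apply (derivable_pt_lim_Rinv (fun y => y)); auto using derivable_pt_lim_id).
  assert (Hp := derivable_pt_lim_comp _ _ t _ _ Hinv (derivable_pt_lim_pow (/ t) k)).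
  assert (He := derivable_pt_lim_comp _ _ t _ _ (derivable_pt_lim_opp _ _ _ Hinv)
                  (derivable_pt_lim_exp (- / t))).
  pose proof (derivable_pt_lim_mult _ _ t _ _ Hp He) as M.
  unfold mult_fct, opp_fct, comp in M.
  match type of M with derivable_pt_lim _ _ ?L =>
    replace (- INR k * flat_core (S k) t + flat_core (S (S k)) t) with L end.
  - exact M.
  - unfold flat_core. destruct k as [|k]; simpl; field; auto.
Qed.

Lemma exp_pow_INR n y : exp (INR n * y) = exp y ^ n.
Proof.
  induction n as [|n IH].
  - simpl. rewrite Rmult_0_l, exp_0; ring.
  - rewrite S_INR, Rmult_plus_distr_r, exp_plus, IH, Rmult_1_l. simpl. ring.
Qed.

(** Polynomial growth is dominated by [exp]: [u^n <= n^n e^u] for [u >= 0],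
    by [1 + v <= e^v] applied to [v = u/n]. *)
Lemma pow_le_exp n u : 0 <= u -> u ^ n <= INR n ^ n * exp u.
Proof.
  intros Hu.
  assert (le_exp : forall v, 1 + v <= exp v).
  { intros v. destruct (Req_dec v 0) as [->|Hv]; [rewrite exp_0; lra|].
    pose proof (exp_ineq1 v Hv); lra. }
  destruct n as [|n]; [simpl; specialize (le_exp u); lra|].
  set (N := INR (S n)). assert (HN : 0 < N) by (apply lt_0_INR; lia).
  replace u with (N * (u / N)) at 1 2 by (field; lra).
  change (exp (N * (u / N))) with (exp (INR (S n) * (u / N))).
  rewrite exp_pow_INR, Rpow_mult_distr.
  apply Rmult_le_compat_l; [apply pow_le; lra|].
  apply pow_incr. split; [unfold Rdiv; apply Rmult_le_pos; [auto|left; apply Rinv_0_lt_compat; auto]|].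
  specialize (le_exp (u / N)); lra.
Qed.

(** Near [0+], [flat_core (S k) h <= C h]; this gives differentiability of
    [flat k] at [0] with derivative [0]. *)
Lemma flat_core_bound k h : 0 < h ->
  0 <= flat_core (S k) h <= INR (S (S k)) ^ S (S k) * h.
Proof.
  intros Hh. unfold flat_core. set (u := / h).
  assert (Hu : 0 < u) by (apply Rinv_0_lt_compat; auto).
  pose proof (pow_le_exp (S (S k)) u (Rlt_le _ _ Hu)) as B.
  pose proof (exp_pos u) as Hex.
  rewrite exp_Ropp. split.
  - apply Rmult_le_pos; [apply pow_le; lra|left; apply Rinv_0_lt_compat; auto].
  - replace h with (/ u) by (unfold u; field; lra).
    apply (Rmult_le_reg_r (u * exp u)); [apply Rmult_lt_0_compat; auto|].
    replace (u ^ S k * / exp u * (u * exp u)) with (u ^ S (S k)) by (simpl; field; lra).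
    replace (INR (S (S k)) ^ S (S k) * / u * (u * exp u))
      with (INR (S (S k)) ^ S (S k) * exp u) by (field; lra).
    exact B.
Qed.

Lemma derivable_flat_at_0 k :
  derivable_pt_lim (flat k) 0 (- INR k * flat (S k) 0 + flat (S (S k)) 0).
Proof.
  rewrite !flat_npos by lra. replace (- INR k * 0 + 0) with 0 by ring.
  set (C := INR (S (S k)) ^ S (S k)).
  assert (HC : 0 < C) by (apply pow_lt; apply lt_0_INR; lia).
  intros eps Heps. assert (Hd : 0 < eps / C) by (apply Rdiv_lt_0_compat; auto).
  exists (mkposreal _ Hd). intros h Hh0 Hh. simpl in Hh.
  rewrite Rplus_0_l, (flat_npos k 0) by lra.
  destruct (Rlt_dec 0 h) as [Hp|Hn].
  - rewrite flat_pos by auto.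
    replace ((flat_core k h - 0) / h - 0) with (flat_core (S k) h)
      by (unfold flat_core; simpl; field; lra).
    destruct (flat_core_bound k h Hp) as [B1 B2].
    rewrite Rabs_right by lra. rewrite Rabs_right in Hh by lra.
    apply (Rmult_lt_compat_l C) in Hh; auto.
    replace (C * (eps / C)) with eps in Hh by (field; lra). fold C in B2. lra.
  - rewrite flat_npos by lra. replace ((0 - 0) / h - 0) with 0 by (field; auto).
    rewrite Rabs_R0; auto.
Qed.

(** The derivative formula holds everywhere: away from [0] by local equality. *)
Lemma derivable_flat k t :
  derivable_pt_lim (flat k) t (- INR k * flat (S k) t + flat (S (S k)) t).
Proof.
  destruct (Rtotal_order t 0) as [Hlt|[->|Hgt]].
  - rewrite !flat_npos by lra. replace (- INR k * 0 + 0) with 0 by ring.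
    apply (derivable_pt_lim_locally_ext (fun _ => 0) _ t (t - 1) 0);
      [lra| intros; rewrite flat_npos; lra| apply derivable_pt_lim_const].
  - apply derivable_flat_at_0.
  - rewrite !flat_pos by lra.
    apply (derivable_pt_lim_locally_ext (flat_core k) _ t 0 (t + 1));
      [lra| intros; rewrite flat_pos; lra| apply derivable_flat_core; lra].
Qed.

Lemma smooth_flat k : smooth_RR (flat k).
Proof.
  apply smooth_RR_Dn. intros n. revert k.
  induction n as [|n IH]; intros k; simpl; auto.
  exists (fun t => - INR k * flat (S k) t + flat (S (S k)) t).
  split; [intros; apply derivable_flat|].
  apply Dn_plus; auto. apply Dn_mult; auto. apply Dn_const.
Qed.

Lemma flat0_pos t : 0 < t -> 0 < flat 0 t.
Proof.
  intros H; rewrite flat_pos by auto; unfold flat_core; simpl.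
  rewrite Rmult_1_l; apply exp_pos.
Qed.

Lemma flat0_nneg t : 0 <= flat 0 t.
Proof. destruct (Rlt_dec 0 t). left; apply flat0_pos; auto. rewrite flat_npos; lra. Qed.

Definition step (t : R) : R := flat 0 t * / (flat 0 t + flat 0 (1 - t)).

Lemma step_den t : 0 < flat 0 t + flat 0 (1 - t).
Proof.
  pose proof (flat0_nneg t); pose proof (flat0_nneg (1 - t)).
  destruct (Rlt_dec 0 t); [pose proof (flat0_pos t) | pose proof (flat0_pos (1 - t))]; lra.
Qed.

Lemma smooth_step : smooth_RR step.
Proof.
  unfold step. apply smooth_RR_mult; [apply smooth_flat|].
  apply smooth_RR_inv; [intros x; pose proof (step_den x); lra|].
  apply smooth_RR_plus; [apply smooth_flat|].
  apply (smooth_RR_comp (flat 0) (fun t => 1 - t)); [apply smooth_flat|].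
  apply smooth_RR_minus; [apply smooth_RR_const|apply smooth_RR_id].
Qed.

Lemma step_le0 t : t <= 0 -> step t = 0.
Proof. intros H; unfold step; rewrite (flat_npos 0 t H); ring. Qed.

Lemma step_ge1 t : 1 <= t -> step t = 1.
Proof.
  intros H; unfold step. rewrite (flat_npos 0 (1 - t)) by lra.
  pose proof (flat0_pos t). field. lra.
Qed.

Lemma step_range t : 0 <= step t <= 1.
Proof.
  unfold step. pose proof (step_den t).
  pose proof (flat0_nneg t); pose proof (flat0_nneg (1 - t)).
  split; [apply Rmult_le_pos; auto; left; apply Rinv_0_lt_compat; auto|].
  apply (Rmult_le_reg_r (flat 0 t + flat 0 (1 - t))); auto.
  rewrite Rmult_assoc, Rinv_l by lra. lra.
Qed.

Lemma smooth_of_curves {A B : Frol} (phi : A -> B) :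
  (forall c, curves A c -> curves B (fun t => phi (c t))) -> smooth phi.
Proof.
  intros H g Hg. apply funcs_spec. intros c Hc.
  apply (proj1 (curves_spec B _) (H c Hc)). auto.
Qed.

Lemma curves_of_smooth {A B : Frol} (phi : A -> B) c :
  smooth phi -> curves A c -> curves B (fun t => phi (c t)).
Proof.
  intros Hphi Hc. apply curves_spec. intros g Hg.
  apply (proj1 (funcs_spec A _) (Hphi g Hg)). auto.
Qed.

Lemma smooth_along {A : Frol} c g : curves A c -> funcs A g -> smooth_RR (fun t => g (c t)).
Proof. intros Hc Hg. apply (proj1 (funcs_spec A g) Hg). auto. Qed.

Lemma smooth_compose {A B C : Frol} (u : A -> B) (v : B -> C) :
  smooth u -> smooth v -> smooth (fun a => v (u a)).
Proof. intros Hu Hv g Hg. apply (Hu _ (Hv g Hg)). Qed.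

Lemma smooth_idmap {A : Frol} : smooth (fun a : A => a).
Proof. intros g Hg; exact Hg. Qed.

Lemma smooth_const_map {A B : Frol} (b : B) : smooth (fun _ : A => b).
Proof.
  apply smooth_of_curves. intros c _. apply curves_spec. intros g _. apply smooth_RR_const.
Qed.

(** Pasting: if [phi] agrees pointwise with one of two smooth maps [psi1], [psi2]
    while the other one agrees with a third smooth map [m], then [phi] is smooth,
    since [g o phi = g o psi1 + g o psi2 - g o m] for every structure function [g]. *)
Lemma smooth_paste {Z W : Frol} (phi psi1 psi2 m : Z -> W) :
  smooth psi1 -> smooth psi2 -> smooth m ->
  (forall z, (phi z = psi1 z /\ psi2 z = m z) \/ (phi z = psi2 z /\ psi1 z = m z)) ->
  smooth phi.
Proof.
  intros H1 H2 Hm Hcase g Hg. apply funcs_spec. intros c Hc.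
  apply (smooth_RR_ext (fun t => g (psi1 (c t)) + g (psi2 (c t)) - g (m (c t)))).
  - intros t. destruct (Hcase (c t)) as [[-> ->]|[-> ->]]; ring.
  - apply smooth_RR_minus; [apply smooth_RR_plus|];
      apply (smooth_along c (fun z => g (_ z))); auto.
Qed.

Lemma curves_prod (A B : Frol) (c : R -> prodF A B) :
  curves (prodF A B) c <-> curves A (fun t => fst (c t)) /\ curves B (fun t => snd (c t)).
Proof.
  split.
  - intros H. split; apply curves_spec; intros f Hf.
    + apply (H (fun p => f (fst p))). left; eauto.
    + apply (H (fun p => f (snd p))). right; eauto.
  - intros [H1 H2] g [[f [Hf ->]]|[f [Hf ->]]].
    + apply (proj1 (curves_spec A _) H1); auto.
    + apply (proj1 (curves_spec B _) H2); auto.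
Qed.

Lemma smooth_prod_map {A B A' B' : Frol} (u : A -> A') (v : B -> B') :
  smooth u -> smooth v ->
  @smooth (prodF A B) (prodF A' B') (fun p => (u (fst p), v (snd p))).
Proof.
  intros Hu Hv. apply smooth_of_curves. intros c Hc.
  apply curves_prod in Hc as [Hc1 Hc2]. apply curves_prod; simpl.
  split; apply curves_of_smooth; auto.
Qed.

Lemma smooth_reparam {X W : Frol} (H : prodF I_frol X -> W) (u : I_frol -> I_frol) :
  smooth u -> smooth H -> smooth (fun p : prodF I_frol X => H (u (fst p), snd p)).
Proof.
  intros Hu HH.
  apply (smooth_compose (A := prodF I_frol X) (B := prodF I_frol X) (fun p => (u (fst p), snd p)) H); auto.
  exact (smooth_prod_map u (fun x : X => x) Hu smooth_idmap).
Qed.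

Lemma curves_I (c : R -> I_frol) : curves I_frol c <-> smooth_RR (fun t => proj1_sig (c t)).
Proof.
  assert (Hid : funcs R_frol (fun x => x)) by (intros c' Hc'; apply (Hc' (fun x => x)); auto).
  split.
  - intros H. apply (H (fun s => proj1_sig s)). exists (fun x => x); split; auto.
  - intros H h [h0 [Hh0 ->]]. apply (smooth_along (fun t => proj1_sig (c t))); auto.
    intros g Hg. apply (smooth_RR_ext (fun t => proj1_sig (c t))); auto.
Qed.

Lemma sig_eq {T} (P : T -> Prop) (x y : sig P) : proj1_sig x = proj1_sig y -> x = y.
Proof. destruct x, y; simpl; intros; subst; f_equal; apply proof_irrelevance. Qed.

Definition Imap (r : R -> R) (Hr : forall t, 0 <= t <= 1 -> 0 <= r t <= 1)
  (s : I_frol) : I_frol := exist _ (r (proj1_sig s)) (Hr _ (proj2_sig s)).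

Lemma smooth_Imap r Hr : smooth_RR r -> smooth (Imap r Hr).
Proof.
  intros Hs. apply smooth_of_curves. intros c Hc. apply curves_I. simpl.
  apply smooth_RR_comp; auto. apply (proj1 (curves_I c) Hc).
Qed.

Definition Istep (a b : R) : I_frol -> I_frol :=
  Imap (fun t => step (a * t + b)) (fun t _ => step_range _).

Lemma smooth_Istep a b : smooth (Istep a b).
Proof. apply smooth_Imap, smooth_RR_comp; [apply smooth_step|apply smooth_RR_affine]. Qed.

Lemma Istep_0 a b s : a * proj1_sig s + b <= 0 -> Istep a b s = I0.
Proof. intros H; apply sig_eq; simpl; apply step_le0; auto. Qed.

Lemma Istep_1 a b s : 1 <= a * proj1_sig s + b -> Istep a b s = I1.
Proof. intros H; apply sig_eq; simpl; apply step_ge1; auto. Qed.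

(** The identity [I -> bI] is smooth, since bI has fewer structure functions. *)
Lemma smooth_I_bI : @smooth I_frol bI_frol (fun s => s).
Proof.
  apply smooth_of_curves. intros c Hc g [Hg _]. apply (smooth_along c g Hc Hg).
Qed.

(** Conversely, [bI -> I] is smooth after composing with a reparametrization that
    is constant near both ends; [sigI] is one, fixing [0] and [1]. *)
Definition sigI : I_frol -> I_frol := Istep (4/3) (-1/6).

Lemma smooth_sigI : @smooth bI_frol I_frol sigI.
Proof.
  apply smooth_of_curves. intros c Hc. apply curves_I. simpl.
  apply (Hc (fun s : I_frol => step (4/3 * proj1_sig s + -1/6))). split.
  - apply (smooth_Istep (4/3) (-1/6) (fun s => proj1_sig s)).
    intros c' Hc'. apply (proj1 (curves_I c') Hc').
  - exists (1/8). split; [lra|split].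
    + intros [s Hs] [t Ht] Hs' Ht'; simpl in *. rewrite !step_le0 by lra. auto.
    + intros [s Hs] [t Ht] Hs' Ht'; simpl in *. rewrite !step_ge1 by lra. auto.
Qed.

Lemma sigI_0 : sigI I0 = I0.
Proof. apply Istep_0. simpl. lra. Qed.

Lemma sigI_1 : sigI I1 = I1.
Proof. apply Istep_1. simpl. lra. Qed.

Lemma smooth_inl (A B : Frol) : @smooth A (coprodF A B) inl.
Proof.
  apply smooth_of_curves. intros c Hc g Hg. apply Hg. left; eauto.
Qed.

Lemma smooth_case {A B W : Frol} (a : A -> W) (b : B -> W) :
  smooth a -> smooth b ->
  @smooth (coprodF A B) W (fun z => match z with inl x => a x | inr y => b y end).
Proof.
  intros Ha Hb g Hg c [[c' [Hc ->]]|[c' [Hc ->]]].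
  - apply (smooth_along c' (fun x => g (a x))); auto.
  - apply (smooth_along c' (fun y => g (b y))); auto.
Qed.

Lemma qproj_eq {Z} (r : Z -> Z -> Prop) a b : qrel r a b -> qproj r a = qproj r b.
Proof.
  intros H. apply sig_eq. simpl. extensionality z. apply propositional_extensionality.
  split; intros H'; eapply rst_trans; eauto using rst_sym.
Qed.

Lemma smooth_qproj (Z : Frol) (r : Z -> Z -> Prop) : @smooth Z (quotF Z r) (qproj r).
Proof.
  apply smooth_of_curves. intros c Hc g Hg. apply Hg. eauto.
Qed.

Definition qlift {Z T : Type} (r : Z -> Z -> Prop) (Fn : Z -> T)
  (P : quot_carrier Z r) : T :=
  Fn (proj1_sig (constructive_indefinite_description _ (proj2_sig P))).

Lemma qlift_eq {Z T : Type} (r : Z -> Z -> Prop) (Fn : Z -> T) :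
  (forall a b, r a b -> Fn a = Fn b) -> forall z, qlift r Fn (qproj r z) = Fn z.
Proof.
  intros Hr z. unfold qlift.
  destruct (constructive_indefinite_description _ _) as [z' Hz']. simpl in *.
  assert (H : qrel r z z') by (rewrite Hz'; apply rst_refl).
  clear Hz'. induction H; congruence || (symmetry; auto).
Qed.

Lemma smooth_qlift {Z W : Frol} (r : Z -> Z -> Prop) (Fn : Z -> W) :
  (forall a b, r a b -> Fn a = Fn b) -> smooth Fn ->
  @smooth (quotF Z r) W (qlift r Fn).
Proof.
  intros Hr HFn g Hg c [c' [Hc ->]].
  apply (smooth_RR_ext (fun t => g (Fn (c' t)))).
  - intros t. rewrite qlift_eq; auto.
  - apply (smooth_along c' (fun z => g (Fn z))); auto.
Qed.

Lemma ph_const (X W : PFrol) : phomotopic (const_map X W) (const_map X W).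
Proof.
  exists (fun _ => base W). repeat split; auto. apply smooth_const_map.
Qed.

Definition revI : I_frol -> I_frol := Imap (fun t => 1 - t) (fun t Ht => ltac:(lra)).

Lemma ph_sym (X W : PFrol) (g1 g2 : X -> W) : phomotopic g1 g2 -> phomotopic g2 g1.
Proof.
  intros [H [Hs [H0 [H1 Hb]]]].
  exists (fun p : prodF I_frol X => H (revI (fst p), snd p)). repeat split.
  - apply smooth_reparam; auto. apply smooth_Imap, smooth_RR_minus.
    + apply smooth_RR_const.
    + apply smooth_RR_id.
  - intros x. change (H (revI I0, x) = g2 x).
    replace (revI I0) with I1 by (apply sig_eq; simpl; ring). auto.
  - intros x. change (H (revI I1, x) = g1 x).
    replace (revI I1) with I0 by (apply sig_eq; simpl; ring). auto.
  - intros t. apply Hb.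
Qed.

(** Transitivity: the first homotopy at time [step (2s)], the second at time
    [step (2s-1)]; each half is constant where the other one is in use. *)
Lemma ph_trans (X W : PFrol) (g1 g2 g3 : X -> W) :
  phomotopic g1 g2 -> phomotopic g2 g3 -> phomotopic g1 g3.
Proof.
  intros [H [Hs [H0 [H1 Hb]]]] [K [Ks [K0 [K1 Kb]]]].
  set (first_half := fun p : prodF I_frol X => H (Istep 2 0 (fst p), snd p)).
  set (second_half := fun p : prodF I_frol X => K (Istep 2 (-1) (fst p), snd p)).
  exists (fun p => if Rle_dec (proj1_sig (fst p)) (1/2) then first_half p else second_half p).
  repeat split.
  - apply (smooth_paste _ first_half second_half (fun p => H (I1, snd p))).
    + apply smooth_reparam; auto using smooth_Istep.
    + apply smooth_reparam; auto using smooth_Istep.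
    + apply (smooth_reparam H (fun _ => I1)); auto using smooth_const_map.
    + intros p; change (I_frol * X)%type in p; destruct p as [[s Hs01] x].
      unfold first_half, second_half; simpl.
      destruct (Rle_dec s (1/2)) as [Hle|Hgt]; [left|right]; split; auto.
      * rewrite Istep_0 by (simpl; lra). rewrite K0, H1. reflexivity.
      * rewrite Istep_1 by (simpl; lra). reflexivity.
  - intros x. simpl. destruct (Rle_dec 0 (1/2)); [|lra].
    unfold first_half. rewrite Istep_0 by (simpl; lra). auto.
  - intros x. simpl. destruct (Rle_dec 1 (1/2)); [lra|].
    unfold second_half. rewrite Istep_1 by (simpl; lra). auto.
  - intros t. destruct (Rle_dec _ _); [apply Hb|apply Kb].
Qed.

Lemma same_class_phomotopic (X W : PFrol) (g1 g2 : X -> W) :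
  same_class g1 g2 -> g1 = g2 \/ phomotopic g1 g2.
Proof.
  intros Hc. induction Hc as [a b Hab|a|a b _ IH|a b c _ IH1 _ IH2]; auto.
  - destruct IH as [->|IH]; auto using ph_sym.
  - destruct IH1 as [->|IH1]; auto. destruct IH2 as [->|IH2]; eauto using ph_trans.
Qed.

Lemma null_homotopy_of_class (X W : PFrol) (k : X -> W) :
  same_class k (const_map X W) -> phomotopic (const_map X W) k.
Proof.
  intros Hc. destruct (same_class_phomotopic X W _ _ Hc) as [->|Hp].
  - apply ph_const.
  - apply ph_sym; auto.
Qed.

Lemma precompose_class (X Y W : PFrol) (f : X -> Y) (k1 k2 : Y -> W) :
  pointed_smooth f -> same_class k1 k2 -> same_class (fun x => k1 (f x)) (fun x => k2 (f x)).
Proof.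
  intros [Hfs Hfb] Hc. induction Hc as [a b Hab|a|a b _ IH|a b c _ IH1 _ IH2].
  - apply rst_step. destruct Hab as [H [Hs [H0 [H1 Hb]]]].
    exists (fun p : prodF I_frol X => H (fst p, f (snd p))). repeat split; auto.
    + apply (smooth_compose (A := prodF I_frol X) (B := prodF I_frol Y)
               (fun p => (fst p, f (snd p))) H); auto.
      exact (smooth_prod_map (fun t : I_frol => t) f smooth_idmap Hfs).
    + intros t. simpl. rewrite Hfb. auto.
  - apply rst_refl.
  - apply rst_sym; auto.
  - eapply rst_trans; eauto.
Qed.

Lemma smooth_cone_pt (X Y : PFrol) (f : X -> Y) :
  @smooth (prodF I_frol X) (coneF f)
    (fun p => qproj (cone_rel f) (cyl_pt f (fst p) (snd p))).
Proof.
  exact (smooth_compose _ _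
           (smooth_compose _ _
              (smooth_compose _ _
                 (smooth_prod_map (fun t : I_frol => t : bI_frol) (fun x : X => x)
                    smooth_I_bI smooth_idmap)
                 (smooth_inl _ Y))
              (smooth_qproj _ (cyl_rel f)))
           (smooth_qproj _ (cone_rel f))).
Qed.

(** [l^* ; f^*] is trivial: for any pointed smooth [h] on the cone, the cone
    coordinate [t] itself contracts [h o l o f] to the constant map. *)
Lemma cone_null_homotopy (X Y W : PFrol) (f : X -> Y) (h : coneF f -> W) :
  pointed_smooth h -> phomotopic (const_map X W) (fun x => h (cone_inc f (f x))).
Proof.
  intros [Hs Hb].
  exists (fun p : prodF I_frol X => h (qproj (cone_rel f) (cyl_pt f (fst p) (snd p)))).
  repeat split.
  - exact (smooth_compose _ h (smooth_cone_pt X Y f) Hs).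
  - intros x. unfold const_map. rewrite <- Hb. f_equal. apply qproj_eq, rst_step.
    split; left; eauto.
  - intros x. unfold cone_inc. do 2 f_equal. apply qproj_eq, rst_step.
    exists x; split; reflexivity.
  - intros t. rewrite <- Hb. f_equal. apply qproj_eq, rst_step.
    split; [right|left]; eauto.
Qed.

(** Conversely, a null-homotopy [K : const ~ g o f] extends [g] over the cone:
    on the cylinder put [K] (time reparametrized by [sigI], which makes it smooth
    on the flattened interval) on [bI * X] and [g] on [Y]; this respects the gluing
    [(1,x) ~ f x] and is constant on the collapsed set, so it descends twice. *)
Section ConeExtension.
Variables (X Y W : PFrol) (f : X -> Y) (g : Y -> W) (K : prodF I_frol X -> W).
Hypothesis g_smooth : smooth g.
Hypothesis K_smooth : smooth K.
Hypothesis K_0 : forall x, K (I0, x) = base W.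
Hypothesis K_1 : forall x, K (I1, x) = g (f x).
Hypothesis K_base : forall t, K (t, base X) = base W.

Definition cyl_body (z : coprodF (prodF bI_frol X) Y) : W :=
  match z with inl p => K (sigI (fst p), snd p) | inr y => g y end.

Lemma cyl_body_glue a b : cyl_rel f a b -> cyl_body a = cyl_body b.
Proof. intros [x [-> ->]]. simpl. change bI1 with I1. rewrite sigI_1. auto. Qed.

Definition cyl_ext : cylF f -> W := qlift (cyl_rel f) cyl_body.

Lemma cyl_ext_smooth : smooth cyl_ext.
Proof.
  apply smooth_qlift; [apply cyl_body_glue|]. apply smooth_case; auto.
  exact (smooth_compose _ K
           (smooth_prod_map (A := bI_frol) (A' := I_frol) sigI (fun x : X => x)
              smooth_sigI smooth_idmap) K_smooth).
Qed.

Lemma cyl_ext_collapsed p : cone_set f p -> cyl_ext p = base W.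
Proof.
  intros [[x ->]|[t ->]]; unfold cyl_ext, cyl_pt; rewrite qlift_eq by apply cyl_body_glue;
    simpl; auto.
  change bI0 with I0. rewrite sigI_0. auto.
Qed.

Lemma cyl_ext_respects a b : cone_rel f a b -> cyl_ext a = cyl_ext b.
Proof. intros [Ha Hb]. rewrite (cyl_ext_collapsed a Ha), (cyl_ext_collapsed b Hb). auto. Qed.

Definition cone_ext : coneF f -> W := qlift (cone_rel f) cyl_ext.

Lemma cone_ext_pointed : pointed_smooth cone_ext.
Proof.
  split.
  - apply smooth_qlift; [apply cyl_ext_respects|apply cyl_ext_smooth].
  - unfold cone_ext. simpl. rewrite qlift_eq by apply cyl_ext_respects.
    apply cyl_ext_collapsed. left; eauto.
Qed.

Lemma cone_ext_inc y : cone_ext (cone_inc f y) = g y.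
Proof.
  unfold cone_ext, cone_inc, cyl_ext, cyl_inc.
  rewrite qlift_eq by apply cyl_ext_respects. rewrite qlift_eq by apply cyl_body_glue.
  reflexivity.
Qed.

End ConeExtension.

Theorem lemma6 (X Y : PFrol) (f : X -> Y)
  (Hf : pointed_smooth f) (W : PFrol) (g : Y -> W) (Hg : pointed_smooth g) :
  (exists h : coneF f -> W,
      pointed_smooth h /\ same_class (fun y => h (cone_inc f y)) g)
  <-> same_class (fun x => g (f x)) (const_map X W).
Proof.
  split.
  - (* g o f ~ h o l o f ~ const *)
    intros [h [Hh Hcl]].
    apply rst_trans with (fun x => h (cone_inc f (f x))).
    + apply rst_sym, (precompose_class X Y W f (fun y => h (cone_inc f y)) g); auto.
    + apply rst_sym, rst_step, cone_null_homotopy; auto.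
  -
    intros Hc.
    destruct (null_homotopy_of_class X W _ Hc) as [K [HKs [HK0 [HK1 HKb]]]].
    exists (cone_ext X Y W f g K). split.
    + apply cone_ext_pointed; auto. apply Hg.
    + replace (fun y => cone_ext X Y W f g K (cone_inc f y)) with g.
      * apply rst_refl.
      * extensionality y. rewrite cone_ext_inc; auto.
Qed.
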